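(* Let $T>0$. Let $E:[0,T]\times\mathbb{R}^2\to\mathbb{R}^2$ and $b:[0,T]\times\mathbb{R}^2\to\mathbb{R}$ be bounded and Lipschitz (i.e. in $W^{1,\infty}$), with $\inf|b|>0$, and set $B=b\,e_3$. For $\Delta t>0$ and $\varepsilon>0$ set $t^n=n\Delta t$, $\lambda=\Delta t/\varepsilon^2$, and given $(x^0,v^0)\in\mathbb{R}^2\times\mathbb{R}^2$ define $(x^n,v^n)$ by $$\varepsilon\frac{x^{n+1}-x^n}{\Delta t}=v^{n+1},\qquad \varepsilon\frac{v^{n+1}-v^n}{\Delta t}=\frac1\varepsilon v^{n+1}\wedge B(t^n,x^n)+E(t^n,x^n),$$ and $(y^n)$ by $y^0=x^0$ and $\dfrac{y^{n+1}-y^n}{\Delta t}=U(t^n,y^n)$. Then there exist constants $C>0$ and $\lambda_0>0$ depending only on $E$, $b$ and $T$ such that whenever $0<\Delta t\le1$ and $\lambda\ge\lambda_0$, for all $n$ with $t^n\le T$, $$\|x^n-y^n\|\le\frac{C\,\Delta t}{\lambda}\Big[1+\Big\|\frac{v^0}{\varepsilon}-U(t^0,x^0)\Big\|\Big].$$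
   Context: Vectors of $\mathbb{R}^2$ are identified with vectors $(w_1,w_2,0)$ of $\mathbb{R}^3$, $e_3=(0,0,1)$, and $\wedge$ is the cross product; thus for $w\in\mathbb{R}^2$ and $B=b\,e_3$, $w\wedge B=b\,(w_2,-w_1)\in\mathbb{R}^2$. The guiding-center drift is $U(t,x)=\dfrac{E(t,x)\wedge B(t,x)}{\|B(t,x)\|^2}$. *)

From Stdlib Require Import Reals Lra.
Open Scope R_scope.

(* Vectors of R^2, identified with (w1,w2,0) in R^3. *)
Definition vec : Type := (R * R)%type.
Definition vadd (u w : vec) : vec := (fst u + fst w, snd u + snd w).
Definition vsub (u w : vec) : vec := (fst u - fst w, snd u - snd w).
Definition vscale (a : R) (u : vec) : vec := (a * fst u, a * snd u).
Definition vnorm (u : vec) : R := sqrt (fst u ^ 2 + snd u ^ 2).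

(* w /\ (b e3) = b (w2, -w1) *)
Definition wedge_e3 (w : vec) (b : R) : vec := (b * snd w, - (b * fst w)).

(* Guiding-center drift U = (E /\ B) / |B|^2 with B = b e3, |B|^2 = b^2. *)
Definition drift (E : R -> vec -> vec) (b : R -> vec -> R) (t : R) (x : vec) : vec :=
  vscale (/ (b t x ^ 2)) (wedge_e3 (E t x) (b t x)).

Definition W1inf_vec (T : R) (E : R -> vec -> vec) : Prop :=
  (exists M, forall t x, 0 <= t <= T -> vnorm (E t x) <= M) /\
  (exists L, forall t s x y, 0 <= t <= T -> 0 <= s <= T ->
     vnorm (vsub (E t x) (E s y)) <= L * (Rabs (t - s) + vnorm (vsub x y))).

Definition W1inf_scal (T : R) (b : R -> vec -> R) : Prop :=
  (exists M, forall t x, 0 <= t <= T -> Rabs (b t x) <= M) /\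
  (exists L, forall t s x y, 0 <= t <= T -> 0 <= s <= T ->
     Rabs (b t x - b s y) <= L * (Rabs (t - s) + vnorm (vsub x y))).

Definition scheme (E : R -> vec -> vec) (b : R -> vec -> R) (dt eps : R)
  (x v : nat -> vec) : Prop :=
  forall n : nat,
    vscale (eps / dt) (vsub (x (S n)) (x n)) = v (S n) /\
    vscale (eps / dt) (vsub (v (S n)) (v n)) =
      vadd (vscale (/ eps) (wedge_e3 (v (S n)) (b (INR n * dt) (x n))))
           (E (INR n * dt) (x n)).

Definition gc_scheme (E : R -> vec -> vec) (b : R -> vec -> R) (dt : R)
  (y : nat -> vec) : Prop :=
  forall n : nat,
    vscale (/ dt) (vsub (y (S n)) (y n)) = drift E b (INR n * dt) (y n).

From Stdlib Require Import Reals Lra Lia.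
Open Scope R_scope.

(** Write w^n = v^n / eps and U^n = U(t^n, x^n).  The velocity equation says exactly that
    w^n - U^n = z - z /\ (lambda B(t^n, x^n)) with z = w^{n+1} - U^n, and z is orthogonal
    to z /\ e3, so |w^{n+1} - U^n| <= |w^n - U^n| / (lambda inf|b|).  The relative velocity
    therefore relaxes geometrically, down to a floor of order dt / lambda coming from the
    motion of U along the trajectory.  Since x^{n+1} - x^n = dt w^{n+1}, the position error
    against the explicit Euler scheme for U obeys e^{n+1} <= (1 + Lip(U) dt) e^n
    + dt |w^{n+1} - U^n|, and a discrete Gronwall inequality concludes. *)

Lemma vnorm_ge0 (u : vec) : 0 <= vnorm u.
Proof. apply sqrt_pos. Qed.

Lemma vnorm_sqr (u : vec) : vnorm u ^ 2 = fst u ^ 2 + snd u ^ 2.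
Proof. unfold vnorm. rewrite <- Rsqr_pow2, Rsqr_sqrt; [reflexivity | nra]. Qed.

Lemma vdot_le_vnorm (u w : vec) : fst u * fst w + snd u * snd w <= vnorm u * vnorm w.
Proof.
  unfold vnorm. rewrite <- sqrt_mult_alt by nra.
  eapply Rle_trans; [apply RRle_abs |].
  rewrite <- sqrt_Rsqr_abs. apply sqrt_le_1_alt. unfold Rsqr.
  pose proof (pow2_ge_0 (fst u * snd w - snd u * fst w)). nra.
Qed.

Lemma vnorm_triangle (u w : vec) : vnorm (vadd u w) <= vnorm u + vnorm w.
Proof.
  pose proof (vnorm_ge0 u); pose proof (vnorm_ge0 w).
  apply Rsqr_incr_0_var; [| lra]. rewrite !Rsqr_pow2, vnorm_sqr.
  pose proof (vnorm_sqr u); pose proof (vnorm_sqr w); pose proof (vdot_le_vnorm u w).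
  destruct u as [a b], w as [c d]; cbn [fst snd vadd] in *. nra.
Qed.

Lemma vnorm_scale (a : R) (u : vec) : vnorm (vscale a u) = Rabs a * vnorm u.
Proof.
  unfold vnorm, vscale; cbn [fst snd].
  replace ((a * fst u) ^ 2 + (a * snd u) ^ 2) with (a² * (fst u ^ 2 + snd u ^ 2))
    by (unfold Rsqr; ring).
  rewrite sqrt_mult_alt by apply Rle_0_sqr. now rewrite sqrt_Rsqr_abs.
Qed.

Lemma vnorm_wedge (u : vec) (c : R) : vnorm (wedge_e3 u c) = Rabs c * vnorm u.
Proof.
  unfold vnorm, wedge_e3; cbn [fst snd].
  replace ((c * snd u) ^ 2 + (- (c * fst u)) ^ 2) with (c² * (fst u ^ 2 + snd u ^ 2))
    by (unfold Rsqr; ring).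
  rewrite sqrt_mult_alt by apply Rle_0_sqr. now rewrite sqrt_Rsqr_abs.
Qed.

Lemma vnorm_sub_diag (u : vec) : vnorm (vsub u u) = 0.
Proof.
  unfold vnorm, vsub; cbn [fst snd]. rewrite !Rminus_diag.
  replace (0 ^ 2 + 0 ^ 2) with 0 by ring. apply sqrt_0.
Qed.

Lemma vnorm_sub_comm (u w : vec) : vnorm (vsub u w) = vnorm (vsub w u).
Proof. unfold vnorm, vsub; cbn [fst snd]. f_equal; ring. Qed.

Lemma vnorm_sub_triangle (u w z : vec) :
  vnorm (vsub u w) <= vnorm (vsub u z) + vnorm (vsub z w).
Proof.
  replace (vsub u w) with (vadd (vsub u z) (vsub z w)); [apply vnorm_triangle |].
  unfold vadd, vsub; cbn [fst snd]. f_equal; ring.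
Qed.

Lemma vnorm_le_sub_add (u z : vec) : vnorm u <= vnorm (vsub u z) + vnorm z.
Proof.
  replace u with (vadd (vsub u z) z) at 1; [apply vnorm_triangle |].
  destruct u; unfold vadd, vsub; cbn [fst snd]. f_equal; ring.
Qed.

Lemma vnorm_sub_wedge (z : vec) (c : R) : Rabs c * vnorm z <= vnorm (vsub z (wedge_e3 z c)).
Proof.
  unfold vnorm, vsub, wedge_e3; cbn [fst snd].
  rewrite <- sqrt_Rsqr_abs, <- sqrt_mult_alt by apply Rle_0_sqr.
  apply sqrt_le_1_alt. unfold Rsqr. nra.
Qed.

Lemma wedge_e3_sub (e e' : vec) (c c' : R) :
  vsub (wedge_e3 e c) (wedge_e3 e' c') =
  vadd (wedge_e3 (vsub e e') c) (wedge_e3 e' (c - c')).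
Proof. unfold vsub, vadd, wedge_e3; cbn [fst snd]. f_equal; ring. Qed.

Lemma vscale_wedge_inv (e : vec) (c : R) :
  c <> 0 -> vscale (/ c ^ 2) (wedge_e3 e c) = wedge_e3 e (/ c).
Proof. intros Hc. unfold vscale, wedge_e3; cbn [fst snd]. f_equal; field; exact Hc. Qed.

Lemma Rabs_inv_le (b0 c : R) : 0 < b0 -> b0 <= Rabs c -> Rabs (/ c) <= / b0.
Proof. intros Hb0 Hc. rewrite Rabs_inv. apply Rinv_le_contravar; lra. Qed.

Lemma Rabs_inv_sub_le (b0 c c' : R) : 0 < b0 -> b0 <= Rabs c -> b0 <= Rabs c' ->
  Rabs (/ c - / c') <= / b0 ^ 2 * Rabs (c - c').
Proof.
  intros Hb0 Hc Hc'.
  assert (c <> 0) by (intros ->; rewrite Rabs_R0 in Hc; lra).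
  assert (c' <> 0) by (intros ->; rewrite Rabs_R0 in Hc'; lra).
  replace (/ c - / c') with (/ (c * c') * (c' - c)) by (field; auto).
  rewrite Rabs_mult, Rabs_inv, Rabs_mult, (Rabs_minus_sym c').
  apply Rmult_le_compat_r; [apply Rabs_pos |].
  apply Rinv_le_contravar; [nra |]. simpl. nra.
Qed.

Lemma vnorm_wedge_inv_le (e : vec) (c b0 M : R) :
  0 < b0 -> b0 <= Rabs c -> vnorm e <= M -> vnorm (wedge_e3 e (/ c)) <= M / b0.
Proof.
  intros Hb0 Hc He. rewrite vnorm_wedge. unfold Rdiv. rewrite Rmult_comm.
  apply Rmult_le_compat; auto using Rabs_pos, vnorm_ge0, Rabs_inv_le.
Qed.

Lemma vnorm_wedge_inv_sub (e e' : vec) (c c' b0 : R) :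
  0 < b0 -> b0 <= Rabs c -> b0 <= Rabs c' ->
  vnorm (vsub (wedge_e3 e (/ c)) (wedge_e3 e' (/ c'))) <=
  / b0 * vnorm (vsub e e') + / b0 ^ 2 * (vnorm e' * Rabs (c - c')).
Proof.
  intros Hb0 Hc Hc'. rewrite wedge_e3_sub.
  eapply Rle_trans; [apply vnorm_triangle |]. rewrite !vnorm_wedge.
  apply Rplus_le_compat.
  - apply Rmult_le_compat_r; auto using vnorm_ge0, Rabs_inv_le.
  - rewrite (Rmult_comm (vnorm e')), <- Rmult_assoc.
    apply Rmult_le_compat_r; auto using vnorm_ge0, Rabs_inv_sub_le.
Qed.

Lemma W1inf_vec_nonneg (T : R) (F : R -> vec -> vec) : W1inf_vec T F ->
  exists M L, 0 <= M /\ 0 <= L /\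
    (forall t x, 0 <= t <= T -> vnorm (F t x) <= M) /\
    (forall t s x y, 0 <= t <= T -> 0 <= s <= T ->
       vnorm (vsub (F t x) (F s y)) <= L * (Rabs (t - s) + vnorm (vsub x y))).
Proof.
  intros [[M HM] [L HL]]. exists (Rabs M), (Rabs L).
  split; [apply Rabs_pos |]. split; [apply Rabs_pos |]. split.
  - intros t x Ht. eapply Rle_trans; [apply HM, Ht | apply RRle_abs].
  - intros t s x y Ht Hs. eapply Rle_trans; [apply HL; assumption |].
    apply Rmult_le_compat_r; [| apply RRle_abs].
    pose proof (Rabs_pos (t - s)); pose proof (vnorm_ge0 (vsub x y)); lra.
Qed.

Lemma W1inf_drift (T b0 : R) (E : R -> vec -> vec) (b : R -> vec -> R) :
  W1inf_vec T E -> W1inf_scal T b -> 0 < b0 ->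
  (forall t x, 0 <= t <= T -> b0 <= Rabs (b t x)) -> W1inf_vec T (drift E b).
Proof.
  intros [[M HM] [L HL]] [_ [Lb HLb]] Hb0 Hb.
  assert (Hnz : forall t x, 0 <= t <= T -> b t x <> 0).
  { intros t x Ht Z. specialize (Hb t x Ht). rewrite Z, Rabs_R0 in Hb. lra. }
  split.
  - exists (M / b0). intros t x Ht. unfold drift.
    rewrite vscale_wedge_inv by auto. apply vnorm_wedge_inv_le; auto.
  - exists (/ b0 * L + / b0 ^ 2 * (M * Lb)). intros t s x y Ht Hs. unfold drift.
    rewrite !vscale_wedge_inv by auto.
    eapply Rle_trans; [apply (vnorm_wedge_inv_sub _ _ _ _ b0); auto |].
    assert (0 < / b0) by (apply Rinv_0_lt_compat; lra).
    assert (0 < / b0 ^ 2) by (apply Rinv_0_lt_compat; nra).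
    assert (vnorm (E s y) * Rabs (b t x - b s y)
            <= M * (Lb * (Rabs (t - s) + vnorm (vsub x y)))).
    { apply Rmult_le_compat; auto using vnorm_ge0, Rabs_pos. }
    pose proof (HL t s x y Ht Hs).
    rewrite Rmult_plus_distr_r, !Rmult_assoc.
    apply Rplus_le_compat; apply Rmult_le_compat_l; lra.
Qed.

Lemma implicit_velocity_step (dt eps c : R) (e v v' : vec) :
  0 < dt -> 0 < eps -> c <> 0 ->
  vscale (eps / dt) (vsub v' v) = vadd (vscale (/ eps) (wedge_e3 v' c)) e ->
  vsub (vscale (/ eps) v) (vscale (/ c ^ 2) (wedge_e3 e c)) =
  vsub (vsub (vscale (/ eps) v') (vscale (/ c ^ 2) (wedge_e3 e c)))
       (wedge_e3 (vsub (vscale (/ eps) v') (vscale (/ c ^ 2) (wedge_e3 e c)))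
                 (dt / eps ^ 2 * c)).
Proof.
  intros Hdt Heps Hc Hv.
  destruct e as [e1 e2], v as [a1 a2], v' as [a1' a2'].
  unfold vscale, vsub, vadd, wedge_e3 in *; cbn [fst snd] in *.
  injection Hv as Hv1 Hv2.
  replace a1 with (a1' - dt / eps * (/ eps * (c * a2') + e1))
    by (rewrite <- Hv1; field; lra).
  replace a2 with (a2' - dt / eps * (/ eps * - (c * a1') + e2))
    by (rewrite <- Hv2; field; lra).
  f_equal; field; lra.
Qed.

Lemma implicit_velocity_contraction (dt eps c : R) (e v v' : vec) :
  0 < dt -> 0 < eps -> c <> 0 ->
  vscale (eps / dt) (vsub v' v) = vadd (vscale (/ eps) (wedge_e3 v' c)) e ->
  dt / eps ^ 2 * Rabs c * vnorm (vsub (vscale (/ eps) v') (vscale (/ c ^ 2) (wedge_e3 e c)))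
  <= vnorm (vsub (vscale (/ eps) v) (vscale (/ c ^ 2) (wedge_e3 e c))).
Proof.
  intros Hdt Heps Hc Hv. rewrite (implicit_velocity_step dt eps c e v v') by assumption.
  replace (dt / eps ^ 2 * Rabs c) with (Rabs (dt / eps ^ 2 * c)); [apply vnorm_sub_wedge |].
  rewrite Rabs_mult, (Rabs_pos_eq (dt / eps ^ 2)); [reflexivity |].
  apply Rlt_le, Rdiv_lt_0_compat; [lra | apply pow_lt; lra].
Qed.

Lemma implicit_position_increment (dt eps : R) (x x' v' : vec) : 0 < dt -> 0 < eps ->
  vscale (eps / dt) (vsub x' x) = v' -> vsub x' x = vscale dt (vscale (/ eps) v').
Proof.
  intros Hdt Heps <-. unfold vsub, vscale; cbn [fst snd]. f_equal; field; lra.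
Qed.

Lemma explicit_position_increment (dt : R) (y y' u : vec) : 0 < dt ->
  vscale (/ dt) (vsub y' y) = u -> vsub y' y = vscale dt u.
Proof.
  intros Hdt <-. unfold vsub, vscale; cbn [fst snd]. f_equal; field; lra.
Qed.

Lemma vsub_increments (dt : R) (x x' y y' w u u' : vec) :
  vsub x' x = vscale dt w -> vsub y' y = vscale dt u' ->
  vsub x' y' = vadd (vsub x y) (vadd (vscale dt (vsub w u)) (vscale dt (vsub u u'))).
Proof.
  intros Hx Hy. unfold vsub, vadd, vscale in *; cbn [fst snd] in *.
  injection Hx as Hx1 Hx2. injection Hy as Hy1 Hy2. f_equal; lra.
Qed.

Lemma pow_le_exp (a : R) (n : nat) : 0 <= a -> (1 + a) ^ n <= exp (INR n * a).
Proof.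
  intros Ha. induction n as [| n IH].
  - simpl. rewrite Rmult_0_l, exp_0. lra.
  - rewrite S_INR, Rmult_plus_distr_r, Rmult_1_l, exp_plus, (Rmult_comm (exp _)). simpl.
    apply Rmult_le_compat; [lra | apply pow_le; lra | apply exp_ineq1_le | exact IH].
Qed.

Lemma geometric_relaxation (N : nat) (d : nat -> R) (a D : R) :
  d 0%nat <= a + D ->
  (forall k, (k < N)%nat -> d (S k) <= / 2 * d k + D / 2) ->
  forall k, (k <= N)%nat -> d k <= (/ 2) ^ k * a + D.
Proof.
  intros H0 Hd. induction k as [| k IH]; intros Hk.
  - simpl. lra.
  - specialize (IH ltac:(lia)). pose proof (Hd k ltac:(lia)). simpl pow. lra.
Qed.

Lemma discrete_gronwall (N : nat) (e s B : nat -> R) (h : R) :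
  0 <= h -> e 0%nat <= B 0%nat ->
  (forall k, (k < N)%nat -> e (S k) <= (1 + h) * e k + s k) ->
  (forall k, (k < N)%nat -> 0 <= s k) ->
  (forall k, (k < N)%nat -> B k + s k <= B (S k)) ->
  forall k, (k <= N)%nat -> e k <= (1 + h) ^ k * B k.
Proof.
  intros Hh H0 He Hs HB. induction k as [| k IH]; intros Hk.
  - simpl. lra.
  - assert (Hk' : (k < N)%nat) by lia.
    specialize (IH ltac:(lia)).
    pose proof (He k Hk'); pose proof (Hs k Hk').
    assert (Hp : 1 <= (1 + h) ^ S k) by (apply pow_R1_Rle; lra).
    assert ((1 + h) * e k <= (1 + h) ^ S k * B k).
    { simpl. rewrite Rmult_assoc. apply Rmult_le_compat_l; lra. }
    assert ((1 + h) ^ S k * (B k + s k) <= (1 + h) ^ S k * B (S k)).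
    { apply Rmult_le_compat_l; [lra | exact (HB k Hk')]. }
    nra.
Qed.

Section ImplicitScheme.

Variables (T : R) (E : R -> vec -> vec) (b : R -> vec -> R) (b0 MU LU : R).
Hypothesis Hb0 : 0 < b0.
Hypothesis Hb : forall t x, 0 <= t <= T -> b0 <= Rabs (b t x).
Hypothesis HMU : 0 <= MU.
Hypothesis HLU : 0 <= LU.
Hypothesis HUbound : forall t x, 0 <= t <= T -> vnorm (drift E b t x) <= MU.
Hypothesis HUlip : forall t s x y, 0 <= t <= T -> 0 <= s <= T ->
  vnorm (vsub (drift E b t x) (drift E b s y)) <= LU * (Rabs (t - s) + vnorm (vsub x y)).

Variables (dt eps : R) (x v y : nat -> vec) (N : nat).
Hypothesis Hdt : 0 < dt.
Hypothesis Heps : 0 < eps.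
Hypothesis Hlam : 2 * (1 + LU * dt) <= dt / eps ^ 2 * b0.
Hypothesis Hsch : scheme E b dt eps x v.
Hypothesis Hy0 : y 0%nat = x 0%nat.
Hypothesis Hgc : gc_scheme E b dt y.
Hypothesis HN : INR N * dt <= T.

Let w (n : nat) : vec := vscale (/ eps) (v n).
Let U (n : nat) : vec := drift E b (INR n * dt) (x n).
Let d (n : nat) : R := vnorm (vsub (w (S n)) (U n)).
Let q : R := / (dt / eps ^ 2 * b0).
Let K : R := LU * (1 + MU).

Lemma time_in_range (k : nat) : (k <= N)%nat -> 0 <= INR k * dt <= T.
Proof.
  intros Hk. apply le_INR in Hk. pose proof (pos_INR k). split; nra.
Qed.

Lemma q_pos : 0 < q.
Proof. apply Rinv_0_lt_compat. nra. Qed.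

Lemma q_relax : q * (1 + LU * dt) <= / 2.
Proof.
  apply (Rmult_le_reg_l (dt / eps ^ 2 * b0)); [nra |].
  unfold q. rewrite <- Rmult_assoc, Rinv_r by nra. lra.
Qed.

Lemma relative_velocity_contraction (k : nat) : (k <= N)%nat ->
  vnorm (vsub (w (S k)) (U k)) <= q * vnorm (vsub (w k) (U k)).
Proof.
  intros Hk. pose proof (Hb _ (x k) (time_in_range k Hk)) as Hbk.
  assert (Hbk0 : b (INR k * dt) (x k) <> 0) by (intros Z; rewrite Z, Rabs_R0 in Hbk; lra).
  pose proof (implicit_velocity_contraction _ _ _ _ _ _ Hdt Heps Hbk0 (proj2 (Hsch k))) as Hc.
  fold (w k) (w (S k)) in Hc. change (vscale _ (wedge_e3 _ _)) with (U k) in Hc.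
  pose proof (vnorm_ge0 (vsub (w (S k)) (U k))).
  assert (Hlam0 : 0 < dt / eps ^ 2) by (apply Rdiv_lt_0_compat; [lra | apply pow_lt; lra]).
  assert (Hlb : 0 < dt / eps ^ 2 * b0) by (apply Rmult_lt_0_compat; lra).
  apply (Rmult_le_reg_l (dt / eps ^ 2 * b0)); [exact Hlb |].
  unfold q. rewrite <- Rmult_assoc, Rinv_r, Rmult_1_l by lra.
  eapply Rle_trans; [| exact Hc].
  apply Rmult_le_compat_r; [assumption |]. apply Rmult_le_compat_l; lra.
Qed.

Lemma drift_increment (k : nat) : (S k <= N)%nat ->
  vnorm (vsub (U (S k)) (U k)) <= LU * dt * (1 + MU + d k).
Proof.
  intros Hk. unfold U.
  eapply Rle_trans; [apply HUlip; apply time_in_range; lia |].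
  rewrite S_INR, Rmult_plus_distr_r, Rmult_1_l.
  replace (INR k * dt + dt - INR k * dt) with dt by ring. rewrite Rabs_pos_eq by lra.
  rewrite (implicit_position_increment dt eps _ _ _ Hdt Heps (proj1 (Hsch k))).
  fold (w (S k)). rewrite vnorm_scale, Rabs_pos_eq by lra.
  pose proof (vnorm_le_sub_add (w (S k)) (U k)).
  pose proof (HUbound _ (x k) (time_in_range k ltac:(lia))). fold (U k) in *. fold (d k) in *.
  replace (LU * dt * (1 + MU + d k)) with (LU * (dt + dt * (d k + MU))) by ring.
  apply Rmult_le_compat_l; [lra |]. apply Rplus_le_compat_l, Rmult_le_compat_l; lra.
Qed.

Lemma relative_velocity_step (k : nat) : (k < N)%nat -> d (S k) <= / 2 * d k + q * K * dt.
Proof.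
  intros Hk. pose proof q_pos. pose proof q_relax. pose proof (vnorm_ge0 (vsub (w (S k)) (U k))).
  eapply Rle_trans; [apply relative_velocity_contraction; lia |].
  apply Rle_trans with (q * (d k + LU * dt * (1 + MU + d k))).
  - apply Rmult_le_compat_l; [lra |].
    eapply Rle_trans; [apply (vnorm_sub_triangle _ _ (U k)) |].
    rewrite (vnorm_sub_comm (U k)). fold (d k).
    pose proof (drift_increment k Hk). lra.
  - fold (d k) in *. unfold K.
    assert (q * (1 + LU * dt) * d k <= / 2 * d k) by (apply Rmult_le_compat_r; lra).
    nra.
Qed.

Lemma relative_velocity_bound (k : nat) : (k <= N)%nat ->
  d k <= (/ 2) ^ k * (q * vnorm (vsub (w 0%nat) (U 0%nat))) + 2 * q * K * dt.
Proof.
  pose proof q_pos. assert (0 <= K) by (unfold K; nra).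
  assert (0 <= q * K * dt) by (apply Rmult_le_pos; [apply Rmult_le_pos |]; lra).
  apply geometric_relaxation.
  - pose proof (relative_velocity_contraction 0 (Nat.le_0_l N)). fold (d 0%nat) in *. lra.
  - intros j Hj. replace (2 * q * K * dt / 2) with (q * K * dt) by field.
    now apply relative_velocity_step.
Qed.

Lemma position_error_step (k : nat) : (k < N)%nat ->
  vnorm (vsub (x (S k)) (y (S k))) <= (1 + LU * dt) * vnorm (vsub (x k) (y k)) + dt * d k.
Proof.
  intros Hk. pose proof (time_in_range k ltac:(lia)) as Ht.
  rewrite (vsub_increments dt (x k) (x (S k)) (y k) (y (S k)) (w (S k)) (U k)
             (drift E b (INR k * dt) (y k))).
  2: exact (implicit_position_increment dt eps _ _ _ Hdt Heps (proj1 (Hsch k))).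
  2: exact (explicit_position_increment dt _ _ _ Hdt (Hgc k)).
  eapply Rle_trans; [apply vnorm_triangle |].
  eapply Rle_trans; [apply Rplus_le_compat_l, vnorm_triangle |].
  rewrite !vnorm_scale, Rabs_pos_eq by lra. fold (d k).
  pose proof (HUlip _ _ (x k) (y k) Ht Ht) as Hlip.
  rewrite Rminus_diag, Rabs_R0, Rplus_0_l in Hlip. fold (U k) in Hlip.
  assert (dt * vnorm (vsub (U k) (drift E b (INR k * dt) (y k)))
          <= dt * (LU * vnorm (vsub (x k) (y k)))) by (apply Rmult_le_compat_l; lra).
  lra.
Qed.

Lemma position_error_bound :
  vnorm (vsub (x N) (y N)) <=
  exp (LU * T) * (2 * q * dt * (vnorm (vsub (w 0%nat) (drift E b 0 (x 0%nat))) + T * K)).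
Proof.
  assert (HU0 : U 0%nat = drift E b 0 (x 0%nat)) by (unfold U; simpl; now rewrite Rmult_0_l).
  set (r0 := vnorm (vsub (w 0%nat) (drift E b 0 (x 0%nat)))).
  pose proof q_pos. assert (0 <= K) by (unfold K; nra). assert (0 <= r0) by apply vnorm_ge0.
  pose proof (pos_INR N).
  assert (Hhalf : forall k, 0 <= (/ 2) ^ k <= 1).
  { intros k. split; [apply pow_le; lra |]. rewrite <- (pow1 k). apply pow_incr. lra. }
  pose proof (discrete_gronwall N (fun k => vnorm (vsub (x k) (y k)))
    (fun k => dt * ((/ 2) ^ k * (q * r0) + 2 * q * K * dt))
    (fun k => dt * (2 * (q * r0) * (1 - (/ 2) ^ k)) + INR k * dt * (2 * q * K * dt))
    (LU * dt)) as G.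
  eapply Rle_trans; [apply G; auto with arith; clear G |].
  - nra.
  - rewrite Hy0, vnorm_sub_diag. simpl. lra.
  - intros k Hk. pose proof (position_error_step k Hk).
    pose proof (relative_velocity_bound k ltac:(lia)) as Hd. rewrite HU0 in Hd. fold r0 in Hd.
    assert (dt * d k <= dt * ((/ 2) ^ k * (q * r0) + 2 * q * K * dt))
      by (apply Rmult_le_compat_l; lra).
    lra.
  - intros k _. pose proof (Hhalf k).
    apply Rmult_le_pos; [lra |]. apply Rplus_le_le_0_compat; repeat apply Rmult_le_pos; lra.
  - intros k _. right. rewrite S_INR. simpl pow. field.
  - clear G. pose proof (Hhalf N).
    assert (HP : (1 + LU * dt) ^ N <= exp (LU * T)).
    { eapply Rle_trans; [apply pow_le_exp; nra |].
      assert (Hle : INR N * (LU * dt) <= LU * T) by nra.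
      destruct Hle as [Hlt | ->]; [left; now apply exp_increasing | right; reflexivity]. }
    assert (0 <= (1 + LU * dt) ^ N) by (apply pow_le; nra).
    assert (dt * (2 * (q * r0) * (1 - (/ 2) ^ N)) + INR N * dt * (2 * q * K * dt)
            <= 2 * q * dt * (r0 + T * K)).
    { assert (0 <= dt * (2 * (q * r0)) * (/ 2) ^ N)
        by (repeat apply Rmult_le_pos; lra).
      assert (INR N * dt * (2 * q * K * dt) <= T * (2 * q * K * dt))
        by (apply Rmult_le_compat_r; [repeat apply Rmult_le_pos |]; lra).
      lra. }
    assert (0 <= 2 * q * dt * (r0 + T * K)).
    { assert (0 <= T) by nra. repeat apply Rmult_le_pos; nra. }
    apply Rle_trans with ((1 + LU * dt) ^ N * (2 * q * dt * (r0 + T * K)));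
      [apply Rmult_le_compat_l | apply Rmult_le_compat_r]; assumption.
Qed.

End ImplicitScheme.

Theorem theorem4p1 (T : R) (E : R -> vec -> vec) (b : R -> vec -> R) :
  0 < T ->
  W1inf_vec T E ->
  W1inf_scal T b ->
  (exists b0, 0 < b0 /\ forall t x, 0 <= t <= T -> b0 <= Rabs (b t x)) ->
  exists C lambda0 : R, 0 < C /\ 0 < lambda0 /\
    forall (dt eps : R) (x v y : nat -> vec),
      0 < dt -> dt <= 1 -> 0 < eps ->
      lambda0 <= dt / eps ^ 2 ->
      scheme E b dt eps x v ->
      y 0%nat = x 0%nat ->
      gc_scheme E b dt y ->
      forall n : nat, INR n * dt <= T ->
        vnorm (vsub (x n) (y n)) <=
          C * dt / (dt / eps ^ 2) *
          (1 + vnorm (vsub (vscale (/ eps) (v 0%nat)) (drift E b 0 (x 0%nat)))).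
Proof.
  intros HT HE Hbw [b0 [Hb0 Hb]].
  destruct (W1inf_vec_nonneg _ _ (W1inf_drift T b0 E b HE Hbw Hb0 Hb))
    as (MU & LU & HMU & HLU & HUbound & HUlip).
  set (K := LU * (1 + MU)).
  assert (0 <= T * K) by (unfold K; repeat apply Rmult_le_pos; lra).
  pose proof (exp_pos (LU * T)).
  (* [lambda0] makes the relaxation factor [(1 + Lip(U) dt) / (lambda inf|b|)] at most [1/2]. *)
  exists (2 * exp (LU * T) * (1 + T * K) / b0), (2 * (1 + LU) / b0).
  split; [apply Rdiv_lt_0_compat; [apply Rmult_lt_0_compat |]; lra |].
  split; [apply Rdiv_lt_0_compat; lra |].
  intros dt eps x v y Hdt Hdt1 Heps Hlam0 Hsch Hy0 Hgc n Hn.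
  assert (Hlam : 2 * (1 + LU * dt) <= dt / eps ^ 2 * b0).
  { apply (Rmult_le_compat_r b0) in Hlam0; [| lra].
    unfold Rdiv in Hlam0 at 1. rewrite Rmult_assoc, Rinv_l, Rmult_1_r in Hlam0 by lra. nra. }
  pose proof (position_error_bound T E b b0 MU LU Hb0 Hb HMU HLU HUbound HUlip
                dt eps x v y n Hdt Heps Hlam Hsch Hy0 Hgc Hn) as Herr.
  set (lam := dt / eps ^ 2) in *. set (r0 := vnorm (vsub _ (drift E b 0 _))) in *.
  assert (0 <= r0) by apply vnorm_ge0.
  assert (0 < lam) by (apply Rdiv_lt_0_compat; [lra | apply pow_lt; lra]).
  eapply Rle_trans; [exact Herr |].
  replace (2 * exp (LU * T) * (1 + T * K) / b0 * dt / lam * (1 + r0))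
    with (exp (LU * T) * (2 * / (lam * b0) * dt * ((1 + T * K) * (1 + r0)))) by (field; nra).
  apply Rmult_le_compat_l; [lra |]. apply Rmult_le_compat_l.
  - apply Rmult_le_pos; [| lra]. apply Rmult_le_pos; [lra |]. left. apply Rinv_0_lt_compat. nra.
  - unfold K in *. nra.
Qed.
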